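(* Let $G$ be a graph, $\mathrm{Colors}=\{a_1,\ldots,a_q\}$, and consider a color-counting 1-locally checkable problem on $G$ (lists $L_v$, weight set $(\mathrm{Weights},\preceq,\circledast)$, weights $w_{v,a}$, color-counting check function $check$), and let $e_G$ be a clique-width $k$-expression of $G$ (irredundant and satisfying the standing relabeling assumption below). Let $N_0\in[0,\mathcal{N}]^{k\times q}$ be the all-zero matrix. Then the minimum weight of a proper coloring of $G$ equals the minimum of $\lambda(e_G,C,N_0)$ over all matrices $C\in[0,\mathcal{N}]^{k\times q}$ such that $C[i,a]=0$ for every label $i\in\overline{\ell(e_G)}$ and every color $a\in\mathrm{Colors}$.
   Context: Weight set: $(\mathrm{Weights},\preceq,\circledast)$ where $\preceq$ is a total order with a maximum element $\mathrm{Error}$, $\min$ denotes the minimum w.r.t. $\preceq$ (the minimum of an empty set is $\mathrm{Error}$), and $\circledast$ is a closed, commutative, associative binary operation with a neutral element, whose absorbing element is $\mathrm{Error}$, and such that $s_1\preceq s_2$ implies $s_1\circledast s_3\preceq s_2\circledast s_3$. A color-counting 1-locally checkable problem is given by: a simple finite graph $G$; colors $\mathrm{Colors}=\{a_1,\ldots,a_q\}$; for each $v$ a nonempty list $L_v\subseteq \mathrm{Colors}$; a weight set; weights $w_{v,a}\in\mathrm{Weights}\setminus\{\mathrm{Error}\}$ for $a\in L_v$; and a function $check(v,a,n_1,\ldots,n_q)\in\{\mathrm{True},\mathrm{False}\}$ ($v$ a vertex, $a$ a color, $n_j$ nonnegative integers). A coloring $c:V(G)\to\mathrm{Colors}$ is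 valid if $c(v)\in L_v$ for all $v$; its weight is $w(c)=\circledast_{v\in V(G)} w_{v,c(v)}$; it is proper if valid and $check(v,c(v),n_1,\ldots,n_q)$ holds for all $v$, where $n_j=|\{u\in N_G(v): c(u)=a_j\}|$. The problem asks for the minimum weight of a proper coloring. $\mathcal{N}\in[1,|V(G)|]$ is an integer with $check(v,a,n_1,\ldots,n_q)=check(v,a,\min(\mathcal{N},n_1),\ldots,\min(\mathcal{N},n_q))$ for all $v,a,n_1,\ldots,n_q$. $[x,y]$ denotes $\{x,x+1,\ldots,y\}$. Clique-width $k$-expressions use labels in $[1,k]$ and operations: $i(v)$ (new vertex $v$ with label $i$), $e_1\oplus e_2$ (disjoint union), $\eta_{i,j}(e)$, $i\neq j$ (add all edges between label-$i$ and label-$j$ vertices), $\rho_{i\to j}(e)$ (rename label $i$ to $j$). $G_e$ is the labeled graph built by $e$; subexpressions correspond to subtrees of the expression tree. The expression is irredundant: whenever $\eta_{i,j}$ is applied, there are no existing edges between label-$i$ and label-$j$ vertices. Standing assumption: in every relabeling $\rho_{i\to j}(e)$ occurring, some vertex of $G_e$ has label $j$. For a subexpression $e$, $\ell_e(v)$ is the label of $v$ in $G_e$, and $\overline{\ell(e)}$ is the set of labels $i\in[1,k]$ such that no vertex of $G_e$ has label $i$. $(C,N)$-coloring: for a subexpression $e$ of $e_G$ and $C,N\in[0,\mathcal{N}]^{k\times q}$ (rows indexed by labels, columns by colors), a valid coloring $c$ of $G_e$ (i.e. $c(v)\in L_v$) is a $(C,N)$-coloring of $G_e$ if (C1) $\min(\mathcal{N},|\{v\in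 V(G_e): c(v)=a,\ \ell_e(v)=i\}|)=C[i,a]$ for all $i,a$; and (C2) for every $v\in V(G_e)$, $check(v,c(v),n_1,\ldots,n_q)$ is true, where $n_j=\min(\mathcal{N},N[\ell_e(v),a_j]+|\{u\in N_{G_e}(v):c(u)=a_j\}|)$. $\lambda(e,C,N)$ is the minimum weight $w(c)=\circledast_{v\in V(G_e)}w_{v,c(v)}$ over all $(C,N)$-colorings of $G_e$ ($\mathrm{Error}$ if none exists). *)

From mathcomp Require Import all_boot.
Set Implicit Arguments. Unset Strict Implicit. Unset Printing Implicit Defensive.

Record WeightSet := {
  wcar :> Type;
  wle : wcar -> wcar -> bool;
  Err : wcar;
  wop : wcar -> wcar -> wcar;
  wone : wcar;
  wle_refl : forall x, wle x x;
  wle_anti : forall x y, wle x y -> wle y x -> x = y;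
  wle_trans : forall x y z, wle x y -> wle y z -> wle x z;
  wle_total : forall x y, wle x y || wle y x;
  wle_Err : forall x, wle x Err;
  wop_comm : forall x y, wop x y = wop y x;
  wop_assoc : forall x y z, wop x (wop y z) = wop (wop x y) z;
  wop_neutral : forall x, wop wone x = x;
  wop_absorb : forall x, wop Err x = Err;
  wop_mono : forall x y z, wle x y -> wle (wop x z) (wop y z)
}.

Definition wmin (W : WeightSet) (s : seq W) : W :=
  foldr (fun x m => if wle x m then x else m) (@Err W) s.

Inductive cwexp (V : Type) (k : nat) : Type :=
| CLeaf of 'I_k & V
| CUnion of cwexp V k & cwexp V k
| CEta of 'I_k & 'I_k & cwexp V k
| CRho of 'I_k & 'I_k & cwexp V k.

Section CW.
Variables (V : eqType) (k : nat).

Fixpoint verts (e : cwexp V k) : seq V :=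
  match e with
  | CLeaf _ v => [:: v]
  | CUnion e1 e2 => verts e1 ++ verts e2
  | CEta _ _ e => verts e
  | CRho _ _ e => verts e
  end.

(* label function l_e (meaningful on verts e) *)
Fixpoint lab (e : cwexp V k) (u : V) : 'I_k :=
  match e with
  | CLeaf i _ => i
  | CUnion e1 e2 => if u \in verts e1 then lab e1 u else lab e2 u
  | CEta _ _ e => lab e u
  | CRho i j e => if lab e u == i then j else lab e u
  end.

Fixpoint edge (e : cwexp V k) (u w : V) : bool :=
  match e with
  | CLeaf _ _ => false
  | CUnion e1 e2 => edge e1 u w || edge e2 u w
  | CEta i j e =>
      edge e u w ||
      [&& u \in verts e, w \in verts e &
          ((lab e u == i) && (lab e w == j)) || ((lab e u == j) && (lab e w == i))]
  | CRho _ _ e => edge e u w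
  end.

(* well-formedness: disjoint unions, i <> j in eta,
   irredundancy, and the standing relabeling assumption *)
Fixpoint cw_ok (e : cwexp V k) : Prop :=
  match e with
  | CLeaf _ _ => True
  | CUnion e1 e2 =>
      [/\ cw_ok e1, cw_ok e2 & forall v, v \in verts e1 -> v \notin verts e2]
  | CEta i j e =>
      [/\ cw_ok e, i <> j &
          forall u w, u \in verts e -> w \in verts e ->
            lab e u = i -> lab e w = j -> ~~ edge e u w]
  | CRho i j e =>
      cw_ok e /\ exists2 v, v \in verts e & lab e v = j
  end.

Definition label_unused (e : cwexp V k) (i : 'I_k) : bool :=
  all (fun v => lab e v != i) (verts e).

End CW.

Section Problem.
Variables (W : WeightSet) (V : finType) (adj : rel V) (q : nat)
  (L : V -> {set 'I_q}) (w : V -> 'I_q -> W)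
  (check : V -> 'I_q -> ('I_q -> nat) -> bool).

Definition coloring_weight (c : {ffun V -> 'I_q}) : W :=
  \big[@wop W / @wone W]_(v <- enum V) w v (c v).

Definition proper_coloring (c : {ffun V -> 'I_q}) : bool :=
  [forall v, (c v \in L v) &&
     check v (c v) (fun j => #|[set u | adj v u & c u == j]|)].

Definition opt_value : W :=
  wmin [seq coloring_weight c | c <- enum {ffun V -> 'I_q} & proper_coloring c].

Variables (NN k : nat).
Definition mat := {ffun 'I_k * 'I_q -> 'I_NN.+1}.

Definition zero_mat : mat := [ffun _ => ord0].

Definition sub_weight (e : cwexp V k) (c : {ffun V -> 'I_q}) : W :=
  \big[@wop W / @wone W]_(v <- verts e) w v (c v).

(* c (restricted to V(G_e)) is a (C,N)-coloring of G_e *)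
Definition CN_coloring (e : cwexp V k) (C N : mat) (c : {ffun V -> 'I_q}) : bool :=
  [&& all (fun v => c v \in L v) (verts e),
      [forall i : 'I_k, forall a : 'I_q,
         minn NN #|[set v | (v \in verts e) && (c v == a) && (lab e v == i)]|
           == C (i, a)] &
      all (fun v => check v (c v)
             (fun j => minn NN (N (lab e v, j) +
                          #|[set u | (u \in verts e) && edge e v u && (c u == j)]|)))
          (verts e)].

Definition lambda (e : cwexp V k) (C N : mat) : W :=
  wmin [seq sub_weight e c | c <- enum {ffun V -> 'I_q} & CN_coloring e C N c].

End Problem.

(* With the zero matrix N_0, condition (C2) for G_{e_G} = G counts the true
   (capped) neighbourhoods, so a (C, N_0)-coloring of G_{e_G} is just a proper
   coloring of G whose capped colour-per-label counts are C.  Hence every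
   coloring competing in lambda(e_G, C, N_0) is proper, and conversely a proper
   coloring c is a (C_c, N_0)-coloring for its own count matrix C_c, which
   vanishes on unused labels.  Both sides minimise over the same weights. *)
From mathcomp Require Import all_boot.
From HB Require Import structures.
From Stdlib Require Import FunctionalExtensionality.

Set Implicit Arguments.
Unset Strict Implicit.

Section WeightMinimum.
Variable W : WeightSet.

HB.instance Definition _ := Monoid.isComLaw.Build (wcar W) (wone W) (@wop W)
  (@wop_assoc W) (@wop_comm W) (@wop_neutral W).

Lemma wmin_le (T : eqType) (f : T -> W) (s : seq T) x :
  x \in s -> wle (wmin (map f s)) (f x).
Proof.
elim: s => //= y s IHs; rewrite inE => /orP[/eqP-> | /IHs le_min_fx].
  case: ifP => [_ | /negbT le_fy_min]; first exact: wle_refl.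
  by have := wle_total (f y) (wmin (map f s)); rewrite (negbTE le_fy_min).
by case: ifP => // le_fy_min; apply: wle_trans le_fy_min le_min_fx.
Qed.

Lemma le_wmin (T : eqType) (f : T -> W) (s : seq T) y :
  (forall x, x \in s -> wle y (f x)) -> wle y (wmin (map f s)).
Proof.
elim: s => [|z s IHs] le_y_fs /=; first exact: wle_Err.
case: ifP => _; first by apply: le_y_fs; rewrite mem_head.
by apply: IHs => x s_x; apply: le_y_fs; rewrite inE s_x orbT.
Qed.

End WeightMinimum.

Lemma uniq_verts (V : eqType) k (e : cwexp V k) : cw_ok e -> uniq (verts e).
Proof.
elim: e => //= [e1 IH1 e2 IH2 [ok1 ok2 disj] | i j e IH [] | i j e IH []]; auto.
rewrite cat_uniq IH1 // IH2 // andbT.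
by apply/hasPn => v /= v2; apply/negP => /disj; rewrite v2.
Qed.

Section ColoringsOfExpression.
Variables (W : WeightSet) (V : finType) (adj : rel V) (q : nat)
  (L : V -> {set 'I_q}) (w : V -> 'I_q -> W)
  (check : V -> 'I_q -> ('I_q -> nat) -> bool) (NN k : nat).

Definition count_mat (e : cwexp V k) (c : {ffun V -> 'I_q}) : mat q NN k :=
  [ffun ia => inord (minn NN
     #|[set v | (v \in verts e) && (c v == ia.2) && (lab e v == ia.1)]|)].

Lemma count_matE e c i a :
  count_mat e c (i, a) =
  minn NN #|[set v | (v \in verts e) && (c v == a) && (lab e v == i)]| :> nat.
Proof. by rewrite ffunE inordK // ltnS geq_minl. Qed.

Lemma count_mat_unused e c i a :
  label_unused e i -> count_mat e c (i, a) = ord0.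
Proof.
move=> /allP unused_i; apply: val_inj; rewrite /= count_matE.
suff -> : [set v | (v \in verts e) && (c v == a) && (lab e v == i)] = set0.
  by rewrite cards0 minn0.
apply/setP => v; rewrite !inE; apply/negP => /andP[/andP[e_v _] /eqP lab_v].
by have := unused_i v e_v; rewrite lab_v eqxx.
Qed.

Variable eG : cwexp V k.
Hypotheses (eG_ok : cw_ok eG) (eG_verts : forall v, v \in verts eG)
  (eG_edges : forall u v, edge eG u v = adj u v)
  (check_cap : forall v a (n : 'I_q -> nat),
      check v a n = check v a (fun j => minn NN (n j))).

Lemma sub_weight_cover c : sub_weight w eG c = coloring_weight w c.
Proof.
apply: perm_big; apply: uniq_perm; [exact: uniq_verts | exact: enum_uniq |].
by move=> v; rewrite eG_verts mem_enum.
Qed.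

Lemma zero_mat_neighbour_counts (c : {ffun V -> 'I_q}) v :
  (fun j => minn NN (zero_mat q NN k (lab eG v, j) +
     #|[set u | (u \in verts eG) && edge eG v u && (c u == j)]|)) =
  (fun j => minn NN #|[set u | adj v u & c u == j]|).
Proof.
apply: functional_extensionality => j; rewrite ffunE add0n.
by congr (minn NN _); apply: eq_card => u; rewrite !inE eG_verts eG_edges.
Qed.

Lemma CN_coloring_zero_proper C c :
  CN_coloring L check eG C (zero_mat q NN k) c -> proper_coloring adj L check c.
Proof.
case/and3P => /allP c_L _ /allP c_check; apply/forallP => v.
by rewrite c_L // check_cap -zero_mat_neighbour_counts c_check.
Qed.

Lemma proper_CN_coloring_count_mat c :
  proper_coloring adj L check c ->
  CN_coloring L check eG (count_mat eG c) (zero_mat q NN k) c.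
Proof.
move=> /forallP c_proper; apply/and3P; split.
- by apply/allP => v _; case/andP: (c_proper v).
- by apply/forallP => i; apply/forallP => a; rewrite count_matE.
- apply/allP => v _; rewrite zero_mat_neighbour_counts -check_cap.
  by case/andP: (c_proper v).
Qed.

End ColoringsOfExpression.

Theorem lemma1 (W : WeightSet) (V : finType) (adj : rel V)
  (adj_sym : symmetric adj) (adj_irr : irreflexive adj)
  (q : nat) (L : V -> {set 'I_q}) (L_ne : forall v, L v != set0)
  (w : V -> 'I_q -> W) (w_ok : forall v a, a \in L v -> w v a <> @Err W)
  (check : V -> 'I_q -> ('I_q -> nat) -> bool)
  (NN : nat) (NN_range : 1 <= NN <= #|V|)
  (check_cap : forall v a (n : 'I_q -> nat),
      check v a n = check v a (fun j => minn NN (n j)))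
  (k : nat) (eG : cwexp V k) (eG_ok : cw_ok eG)
  (eG_verts : forall v, v \in verts eG)
  (eG_edges : forall u v, edge eG u v = adj u v) :
  @opt_value W V adj q L w check =
  wmin [seq @lambda W V q L w check NN k eG C (@zero_mat q NN k)
       | C : @mat q NN k <- enum (@mat q NN k)
       & [forall i : 'I_k, label_unused eG i ==> [forall a : 'I_q, C (i, a) == ord0]]].
Proof.
have cover c : sub_weight w eG c = coloring_weight w c by exact: sub_weight_cover.
apply: wle_anti.
- apply: le_wmin => C _; apply: le_wmin => c; rewrite mem_filter => /andP[CN_c _].
  rewrite cover; apply: wmin_le; rewrite mem_filter mem_enum andbT.
  exact: (CN_coloring_zero_proper eG_verts eG_edges check_cap CN_c).
- apply: le_wmin => c; rewrite mem_filter => /andP[proper_c _].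
  pose Cc := count_mat NN eG c.
  have admissible_Cc : [forall i, label_unused eG i ==> [forall a, Cc (i, a) == ord0]].
    apply/forallP => i; apply/implyP => unused_i.
    by apply/forallP => a; rewrite count_mat_unused.
  apply: wle_trans (wmin_le (fun C => lambda L w check eG C (zero_mat q NN k)) _) _.
    by rewrite mem_filter mem_enum andbT; exact: admissible_Cc.
  rewrite /lambda -cover; apply: wmin_le.
  rewrite mem_filter mem_enum andbT.
  exact: (proper_CN_coloring_count_mat eG_verts eG_edges check_cap proper_c).
Qed.
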